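(* Let $U=(u_{ij}),V=(v_{ij})\in\mathcal{U}_d(\mathbb{C})$, and let $R_U=(r_{ij})$, $R_V=(s_{ij})$ be real matrices with non-negative entries such that $r_{ij}=0$ iff $u_{ij}=0$ (and $r_{ij}>0$ otherwise), and $s_{ij}=0$ iff $v_{ij}=0$ (and $s_{ij}>0$ otherwise). Then there exists $D\in\mathcal{DU}_d(\mathbb{C})$ such that for all $k,l\in\{1,\dots,d\}$, $$(R_UR_V)_{kl}\neq 0\iff (UDV)_{kl}\neq 0.$$
   Context: $\mathcal{U}_d(\mathbb{C})$ denotes the group of $d\times d$ unitary matrices and $\mathcal{DU}_d(\mathbb{C})$ its subgroup of diagonal unitary matrices. *)

From HB Require Import structures.
From mathcomp Require Import all_boot all_order all_algebra.
From mathcomp Require Import complex.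
From mathcomp Require Import reals.
Set Implicit Arguments. Unset Strict Implicit. Unset Printing Implicit Defensive.
Import Order.TTheory GRing.Theory Num.Theory.
Local Open Scope ring_scope.

Definition adjmx (R : rcfType) (m n : nat) (A : 'M[R[i]]_(m, n)) : 'M[R[i]]_(n, m) :=
  (map_mx (@conjc R) A)^T.

Definition unitary_mx (R : rcfType) (d : nat) (U : 'M[R[i]]_d) : Prop :=
  U *m adjmx U = 1%:M.

Definition diag_unitary_mx (R : rcfType) (d : nat) (D : 'M[R[i]]_d) : Prop :=
  unitary_mx D /\ is_diag_mx D.

From HB Require Import structures.
From mathcomp Require Import all_boot all_order all_algebra.
From mathcomp Require Import complex.
From mathcomp Require Import reals.
From mathcomp Require Import ring lra.
Import Order.TTheory GRing.Theory Num.Theory.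
Local Open Scope ring_scope.

(** Take D = diag(1, x, ..., x^(d-1)) with |x| = 1.  Then (UDV)_kl is the
    value at x of the polynomial p_kl = sum_j u_kj v_jl X^j, while, the
    entries of R_U and R_V being non-negative, (R_U R_V)_kl vanishes iff every
    product u_kj v_jl does, i.e. iff p_kl = 0.  Since the unit circle is
    infinite, some x on it is a root of none of the finitely many nonzero
    p_kl. *)

Section RationalUnitCircle.

Variable R : rcfType.

Definition circle_pt (n : nat) : R[i] :=
  Complex ((1 - n%:R ^+ 2) / (1 + n%:R ^+ 2)) (2 * n%:R / (1 + n%:R ^+ 2)).

Let one_plus_sqr_neq0 (n : nat) : (1 + n%:R ^+ 2 : R) != 0.
Proof. by rewrite gt_eqF // ltr_pwDl // exprn_ge0. Qed.

Lemma circle_pt_unit n : circle_pt n * (circle_pt n)^* = 1.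
Proof.
have nz := one_plus_sqr_neq0 n.
by apply/eqP; rewrite eq_complex /=; apply/andP; split; apply/eqP; field.
Qed.

Lemma circle_pt_inj : injective circle_pt.
Proof.
move=> n m /eqP; rewrite eq_complex /= => /andP[/eqP Re_eq _].
have sqr_eq : (n%:R ^+ 2 : R) = m%:R ^+ 2.
  by move/eqP: Re_eq; rewrite eqr_div ?one_plus_sqr_neq0 // => /eqP; nra.
by apply/eqP; move/eqP: sqr_eq; rewrite -!natrX eqr_nat eqn_exp2r.
Qed.

End RationalUnitCircle.

Lemma exists_common_nonroot (F : idomainType) (I : finType)
    (p : I -> {poly F}) (f : nat -> F) :
  injective f -> exists n, forall i, p i != 0 -> ~~ root (p i) (f n).
Proof.
move=> f_inj; pose P := \prod_(i | p i != 0) p i.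
have P_neq0 : P != 0 by apply/prodf_neq0.
have [n P_fn] : exists n, ~~ root P (f n).
  have : ~~ all (root P) (map f (iota 0 (size P))).
    apply/negP => all_roots.
    have := max_poly_roots P_neq0 all_roots.
    by rewrite map_inj_uniq // iota_uniq size_map size_iota ltnn => /(_ isT).
  by case/allPn => _ /mapP[n _ ->]; exists n.
by exists n => i pi_neq0; move: P_fn; rewrite /root horner_prod => /prodf_neq0; apply.
Qed.

Lemma diag_unitary_diag_mx (R : rcfType) (d : nat) (r : 'rV[R[i]]_d) :
  (forall j, r 0 j * (r 0 j)^* = 1) -> diag_unitary_mx (diag_mx r).
Proof.
move=> r_unit; split; last exact: diag_mx_is_diag.
rewrite /unitary_mx /adjmx map_diag_mx tr_diag_mx mulmx_diag -diag_const_mx.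
by congr diag_mx; apply/rowP => j; rewrite !mxE r_unit.
Qed.

Lemma mulmx_nneg_eq0 (R : numDomainType) (m n p : nat)
    (A : 'M[R]_(m, n)) (B : 'M[R]_(n, p)) k l :
  (forall i j, 0 <= A i j) -> (forall i j, 0 <= B i j) ->
  ((A *m B) k l == 0) = [forall j, (A k j == 0) || (B j l == 0)].
Proof.
move=> A_ge0 B_ge0; rewrite mxE psumr_eq0 => [|j _]; last exact: mulr_ge0.
apply/allP/forallP => [AB0 j|AB0 j _]; last by rewrite mulf_eq0 AB0.
by rewrite -mulf_eq0; apply: AB0; rewrite mem_index_enum.
Qed.

Section DiagonalPowers.

Context {C : comNzRingType} {d : nat} (U V : 'M[C]_d).

Definition diag_powers_poly (k l : 'I_d) : {poly C} :=
  \sum_(j < d) (U k j * V j l) *: 'X^j.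

Lemma mulmx_diag_powers x k l :
  (U *m diag_mx (\row_(j < d) x ^+ j) *m V) k l = (diag_powers_poly k l).[x].
Proof.
rewrite horner_sum mul_mx_diag mxE; apply: eq_bigr => j _.
by rewrite !mxE hornerZ hornerXn mulrAC.
Qed.

Lemma coef_diag_powers_poly k l (j : 'I_d) :
  (diag_powers_poly k l)`_j = U k j * V j l.
Proof.
rewrite coef_sum (bigD1 j) //= coefZ coefXn eqxx mulr1 big1 ?addr0 // => i ji.
by rewrite coefZ coefXn val_eqE eq_sym (negbTE ji) mulr0.
Qed.

Lemma diag_powers_poly_eq0 k l :
  (diag_powers_poly k l == 0) = [forall j, U k j * V j l == 0].
Proof.
apply/eqP/forallP => [p0 j|UV0]; first by rewrite -coef_diag_powers_poly p0 coef0.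
by apply: big1 => j _; rewrite (eqP (UV0 j)) scale0r.
Qed.

End DiagonalPowers.

Theorem lemma22 (R : realType) (d : nat) (U V : 'M[R[i]]_d) (RU RV : 'M[R]_d) :
  unitary_mx U -> unitary_mx V ->
  (forall i j, 0 <= RU i j) -> (forall i j, 0 <= RV i j) ->
  (forall i j, RU i j = 0 <-> U i j = 0) ->
  (forall i j, RV i j = 0 <-> V i j = 0) ->
  exists D : 'M[R[i]]_d, diag_unitary_mx D /\
    forall k l, (RU *m RV) k l != 0 <-> (U *m D *m V) k l != 0.
Proof.
move=> _ _ RU_ge0 RV_ge0 RU0 RV0.
have [n nonroot] := @exists_common_nonroot _ _
  (fun kl : 'I_d * 'I_d => diag_powers_poly U V kl.1 kl.2) _ (@circle_pt_inj R).
exists (diag_mx (\row_(j < d) circle_pt R n ^+ j)); split.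
  by apply: diag_unitary_diag_mx => j; rewrite mxE rmorphXn -exprMn circle_pt_unit expr1n.
move=> k l; rewrite mulmx_diag_powers.
have -> : ((RU *m RV) k l != 0) = (diag_powers_poly U V k l != 0).
  rewrite mulmx_nneg_eq0 // diag_powers_poly_eq0; congr (~~ _); apply: eq_forallb => j.
  have eq0_iff (a : R) (b : R[i]) : (a = 0 <-> b = 0) -> (a == 0) = (b == 0).
    by case=> ab ba; apply/eqP/eqP.
  by rewrite mulf_eq0 (eq0_iff _ _ (RU0 k j)) (eq0_iff _ _ (RV0 j l)).
split=> [p_neq0|]; first exact: (nonroot (k, l)).
by apply: contraNneq => ->; rewrite horner0.
Qed.
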